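(* For every real $r\ge 0$, the sphere $S_r(\Delta_1)=\{Y\in\mathcal{GH}: d_{GH}(\Delta_1,Y)=r\}$ is path connected, i.e., any two of its elements can be joined by a continuous curve in $\mathcal{GH}$ whose image lies in $S_r(\Delta_1)$.
   Context: All metric spaces (with finite-valued metrics) are considered up to isometry. $\mathcal{GH}$ denotes the class (in the sense of von Neumann–Bernays–Gödel set theory) of representatives of isometry classes of all metric spaces. $d_{GH}$ is the Gromov–Hausdorff distance, with values in $[0,\infty]$: $d_{GH}(X,Y)$ is the infimum of $r$ such that there exist a metric space $Z$ and subsets $X',Y'\subset Z$ isometric to $X,Y$ with Hausdorff distance $d_H(X',Y')\le r$. Topology on the class: for each cardinal $n$, the subclass $\mathcal{GH}_n$ of spaces of cardinality at most $n$ is a set, endowed with the topology whose base consists of the open balls of $d_{GH}$. A map $f$ from a topological space $Z$ to $\mathcal{GH}$ is continuous if it is continuous as a map into $\mathcal{GH}_n$ for some (equivalently, every) cardinal $n$ with $f(Z)\subset\mathcal{GH}_n$. A continuous curve is a continuous map from a segment $[a,b]$. $\Delta_1$ is the single-point metric space. *)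

From Stdlib Require Import Reals Lra.
From Coquelicot Require Import Coquelicot.
Open Scope R_scope.

Record MetricSpace := {
  carrier :> Type;
  dist : carrier -> carrier -> R;
  carrier_inhabited : inhabited carrier;
  dist_eq0 : forall x y, dist x y = 0 <-> x = y;
  dist_sym : forall x y, dist x y = dist y x;
  dist_tri : forall x y z, dist x z <= dist x y + dist y z
}.

(* Isometries (spaces are considered up to isometry). *)
Definition isometric (X Y : MetricSpace) : Prop :=
  exists (f : X -> Y) (g : Y -> X),
    (forall x, g (f x) = x) /\ (forall y, f (g y) = y) /\
    (forall x x', dist Y (f x) (f x') = dist X x x').

Definition isometric_embedding (X Z : MetricSpace) (f : X -> Z) : Prop :=
  forall x x', dist Z (f x) (f x') = dist X x x'.

(* Hausdorff distance in [0, +oo] between subsets A B of a metric space Z: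
   the infimum of r > 0 such that each set lies in the open r-neighbourhood
   of the other (+oo if no such r). *)
Definition hausdorff_dist (Z : MetricSpace) (A B : Z -> Prop) : Rbar :=
  Glb_Rbar (fun r => 0 < r /\
    (forall a, A a -> exists b, B b /\ dist Z a b < r) /\
    (forall b, B b -> exists a, A a /\ dist Z a b < r)).

Definition dGH (X Y : MetricSpace) : Rbar :=
  Glb_Rbar (fun r => exists (Z : MetricSpace) (f : X -> Z) (g : Y -> Z),
    isometric_embedding X Z f /\ isometric_embedding Y Z g /\
    Rbar_le (hausdorff_dist Z (fun z => exists x, f x = z)
                              (fun z => exists y, g y = z)) r).

Definition Delta1 : MetricSpace.
Proof.
  refine {| carrier := unit; dist := fun _ _ => 0 |}.
  - exact (inhabits tt).
  - intros [] []; split; reflexivity.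
  - reflexivity.
  - intros; lra.
Defined.

Definition in_sphere_Delta1 (r : R) (Y : MetricSpace) : Prop :=
  dGH Delta1 Y = Finite r.

Definition GH_continuous_on (a b : R) (f : R -> MetricSpace) : Prop :=
  forall t0, a <= t0 <= b -> forall eps, 0 < eps ->
    exists delta, 0 < delta /\
      forall t, a <= t <= b -> Rabs (t - t0) < delta ->
        Rbar_lt (dGH (f t0) (f t)) (Finite eps).

(** A space [Z] lies on the sphere [S_r(Delta_1)] exactly when its diameter is
    [2 r]: gluing the point at distance [c] to all of [Z] witnesses
    [d_GH(Delta_1, Z) <= c] as soon as [diam Z <= 2 c], and conversely two points
    of [Z] both close to the image of the point are close to each other.

    To join [X] to [Y], fix base points [x0], [y0] and consider, for
    [s] in [[0, 2]], the product [X * Y] with the metric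
    [max (wX s * d_X) (wY s * d_Y)], where the weights [(wX s, wY s)] run
    piecewise linearly from [(1, 0)] through [(1, 1)] to [(0, 1)]; a factor of
    weight [0] is collapsed to its base point.  At [s = 0] and [s = 2] this is
    [X] and [Y]; throughout, one weight equals [1], so the diameter stays [2 r].
    Two members [s], [t] both dominate the product metric with the smaller
    weights and exceed it by at most [2 r |s - t|]; gluing along that common
    pseudometric gives [d_GH <= r |s - t|], hence continuity. *)

From Pilot Require Import Defs.
From Stdlib Require Import Reals Lra ProofIrrelevance Classical.
From Coquelicot Require Import Coquelicot.
Open Scope R_scope.

(* Stdlib's [Reals] also exports a [dist]. *)
Notation mdist := Pilot.Defs.dist.

Lemma Glb_Rbar_le_mem (E : R -> Prop) c : E c -> Rbar_le (Glb_Rbar E) (Finite c).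
Proof. intros Hc. exact (proj1 (Glb_Rbar_correct E) c Hc). Qed.

Lemma Glb_Rbar_ge_lb (E : R -> Prop) x :
  (forall h, E h -> x <= h) -> Rbar_le (Finite x) (Glb_Rbar E).
Proof. intros Hx. apply (proj2 (Glb_Rbar_correct E)). exact Hx. Qed.

Lemma Glb_Rbar_approx (E : R -> Prop) x eps :
  Rbar_le (Glb_Rbar E) (Finite x) -> 0 < eps -> exists h, E h /\ h < x + eps.
Proof.
  intros Hx Heps. apply NNPP. intros Hnone.
  assert (Hlb : Rbar_le (Finite (x + eps)) (Glb_Rbar E)).
  { apply Glb_Rbar_ge_lb. intros h Hh. apply Rnot_lt_le. intros Hlt.
    apply Hnone. eauto. }
  destruct (Glb_Rbar E); simpl in *; lra.
Qed.

Lemma Rbar_le_of_forall_gt (G : Rbar) x :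
  (forall c, x < c -> Rbar_le G (Finite c)) -> Rbar_le G (Finite x).
Proof.
  intros H. destruct G as [g | |]; simpl in *; auto.
  - apply Rnot_lt_le. intros Hlt. specialize (H ((g + x) / 2)). simpl in H. lra.
  - apply (H (x + 1)). lra.
Qed.

Lemma Rbar_ge_of_forall_lt (G : Rbar) x :
  (forall c, c < x -> Rbar_le (Finite c) G) -> Rbar_le (Finite x) G.
Proof.
  intros H. destruct G as [g | |]; simpl in *; auto.
  - apply Rnot_lt_le. intros Hlt. specialize (H ((g + x) / 2)). simpl in H. lra.
  - apply (H (x - 1)). lra.
Qed.

Lemma dist_self (M : MetricSpace) x : mdist M x x = 0.
Proof. apply Defs.dist_eq0. reflexivity. Qed.

Lemma dist_nonneg (M : MetricSpace) x y : 0 <= mdist M x y.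
Proof.
  pose proof (Defs.dist_tri M x y x). pose proof (Defs.dist_sym M x y).
  pose proof (dist_self M x). lra.
Qed.

Section Glue.

Variables (A B : MetricSpace) (e : A -> B -> R).
Hypothesis e_pos : forall a b, 0 < e a b.
Hypothesis e_tri_A : forall a a' b, e a b <= mdist A a a' + e a' b.
Hypothesis e_tri_B : forall a b b', e a b <= e a b' + mdist B b' b.
Hypothesis dist_A_le_e : forall a a' b, mdist A a a' <= e a b + e a' b.
Hypothesis dist_B_le_e : forall a b b', mdist B b b' <= e a b + e a b'.

Definition glue_dist (u v : A + B) : R :=
  match u, v with
  | inl a, inl a' => mdist A a a'
  | inr b, inr b' => mdist B b b'
  | inl a, inr b | inr b, inl a => e a b
  end.

Definition glue : MetricSpace.
Proof.
  refine {| carrier := (A + B)%type; Defs.dist := glue_dist |}.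
  - destruct (carrier_inhabited A) as [a]. exact (inhabits (inl a)).
  - intros [a | b] [a' | b']; simpl.
    + rewrite Defs.dist_eq0. split; [intros -> | intros H; injection H]; auto.
    + split; [intros H; specialize (e_pos a b'); lra | discriminate].
    + split; [intros H; specialize (e_pos a' b); lra | discriminate].
    + rewrite Defs.dist_eq0. split; [intros -> | intros H; injection H]; auto.
  - intros [a | b] [a' | b']; simpl; auto using Defs.dist_sym.
  - intros [a | b] [a' | b'] [a'' | b'']; simpl;
      auto using e_tri_A, e_tri_B, dist_A_le_e, dist_B_le_e, Defs.dist_tri.
    + rewrite (Defs.dist_sym A a' a''), Rplus_comm. apply e_tri_A.
    + rewrite (Defs.dist_sym B b b'), Rplus_comm. apply e_tri_B.
Defined.

Lemma dGH_le_glue rho :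
  0 < rho -> (forall a, exists b, e a b < rho) -> (forall b, exists a, e a b < rho) ->
  Rbar_le (dGH A B) (Finite rho).
Proof.
  intros Hrho HA HB. apply Glb_Rbar_le_mem.
  exists glue, inl, inr.
  split; [intros ? ?; reflexivity |]. split; [intros ? ?; reflexivity |].
  apply Glb_Rbar_le_mem. split; [exact Hrho | split].
  - intros z [a <-]. destruct (HA a) as [b Hb]. exists (inr b). eauto.
  - intros z [b <-]. destruct (HB b) as [a Ha]. exists (inl a). eauto.
Qed.

End Glue.

Section CommonPseudometric.

Variables (A B : MetricSpace) (P : Type) (D : P -> P -> R) (iA : A -> P) (iB : B -> P) (K : R).
Hypothesis D_nonneg : forall p q, 0 <= D p q.
Hypothesis D_sym : forall p q, D p q = D q p.
Hypothesis D_tri : forall p q w, D p w <= D p q + D q w.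
Hypothesis D_le_dist_A : forall a a', D (iA a) (iA a') <= mdist A a a'.
Hypothesis dist_A_le_D : forall a a', mdist A a a' <= D (iA a) (iA a') + 2 * K.
Hypothesis D_le_dist_B : forall b b', D (iB b) (iB b') <= mdist B b b'.
Hypothesis dist_B_le_D : forall b b', mdist B b b' <= D (iB b) (iB b') + 2 * K.
Hypothesis iA_covered : forall a, exists b, D (iA a) (iB b) <= 0.
Hypothesis iB_covered : forall b, exists a, D (iA a) (iB b) <= 0.

Lemma dGH_le_common_pseudometric : Rbar_le (dGH A B) (Finite K).
Proof.
  assert (HK : 0 <= K).
  { destruct (carrier_inhabited A) as [a].
    pose proof (dist_A_le_D a a) as Ha. rewrite dist_self in Ha.
    pose proof (D_le_dist_A a a) as Ha'. rewrite dist_self in Ha'. lra. }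
  apply Rbar_le_of_forall_gt. intros rho Hrho.
  set (delta := (rho - K) / 2).
  assert (Hdelta : 0 < delta /\ K + delta < rho) by (unfold delta; lra).
  clearbody delta.
  unshelve eapply (dGH_le_glue A B (fun a b => D (iA a) (iB b) + K + delta)).
  - intros a b. pose proof (D_nonneg (iA a) (iB b)). lra.
  - intros a a' b. pose proof (D_tri (iA a) (iA a') (iB b)).
    pose proof (D_le_dist_A a a'). lra.
  - intros a b b'. pose proof (D_tri (iA a) (iB b') (iB b)).
    pose proof (D_le_dist_B b' b). lra.
  - intros a a' b. pose proof (D_tri (iA a) (iB b) (iA a')) as T.
    rewrite (D_sym (iB b) (iA a')) in T. pose proof (dist_A_le_D a a'). lra.
  - intros a b b'. pose proof (D_tri (iB b) (iA a) (iB b')) as T.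
    rewrite (D_sym (iB b) (iA a)) in T. pose proof (dist_B_le_D b b'). lra.
  - lra.
  - intros a. destruct (iA_covered a) as [b Hb]. exists b. lra.
  - intros b. destruct (iB_covered b) as [a Ha]. exists a. lra.
Qed.

End CommonPseudometric.

Definition is_diam (Z : MetricSpace) (D : R) : Prop :=
  (forall z z', mdist Z z z' <= D) /\
  (forall eps, 0 < eps -> exists z z', D - eps < mdist Z z z').

Lemma dGH_Delta1_ge (Z : MetricSpace) z z' :
  Rbar_le (Finite (mdist Z z z' / 2)) (dGH Delta1 Z).
Proof.
  apply Glb_Rbar_ge_lb. intros h [W [f [g [_ [Hg Hh]]]]].
  cut (mdist Z z z' <= 2 * h); [lra |].
  apply Rle_plus_epsilon. intros eps Heps.
  destruct (Glb_Rbar_approx _ _ (eps / 2) Hh) as [h' [[_ [_ Hnear]] Hh']]; [lra |].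
  destruct (Hnear (g z) (ex_intro _ z eq_refl)) as [p [[[] <-] Hz]].
  destruct (Hnear (g z') (ex_intro _ z' eq_refl)) as [p' [[[] <-] Hz']].
  rewrite <- (Hg z z').
  pose proof (Defs.dist_tri W (g z) (f tt) (g z')).
  rewrite (Defs.dist_sym W (g z) (f tt)) in *. lra.
Qed.

Lemma dGH_Delta1_le (Z : MetricSpace) c :
  0 <= c -> (forall z z', mdist Z z z' <= 2 * c) -> Rbar_le (dGH Delta1 Z) (Finite c).
Proof.
  intros Hc Hdiam. apply Rbar_le_of_forall_gt. intros rho Hrho.
  unshelve eapply (dGH_le_glue Delta1 Z (fun _ _ => (c + rho) / 2)); simpl.
  all: try (intros; lra).
  - intros _ b b'. pose proof (dist_nonneg Z b' b). lra.
  - intros _ b b'. pose proof (Hdiam b b'). lra.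
  - intros _. destruct (carrier_inhabited Z) as [z]. exists z. lra.
  - intros _. exists tt. lra.
Qed.

Lemma in_sphere_Delta1_iff r (Z : MetricSpace) :
  0 <= r -> in_sphere_Delta1 r Z <-> is_diam Z (2 * r).
Proof.
  intros Hr. unfold in_sphere_Delta1. split.
  - intros HZ. split.
    + intros z z'. pose proof (dGH_Delta1_ge Z z z') as H.
      rewrite HZ in H. simpl in H. lra.
    + intros eps Heps. apply NNPP. intros Hnone.
      assert (Hsmall : forall z z', mdist Z z z' <= 2 * (r - eps / 2)).
      { intros z z'. apply Rnot_lt_le. intros Hlt. apply Hnone.
        exists z, z'. lra. }
      destruct (carrier_inhabited Z) as [z0].
      pose proof (Hsmall z0 z0) as H0. rewrite dist_self in H0.
      pose proof (dGH_Delta1_le Z (r - eps / 2) ltac:(lra) Hsmall) as H.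
      rewrite HZ in H. simpl in H. lra.
  - intros [Hle Hnear]. apply Rbar_le_antisym.
    + exact (dGH_Delta1_le Z r Hr Hle).
    + apply Rbar_ge_of_forall_lt. intros c Hc.
      destruct (Hnear (2 * (r - c))) as [z [z' Hz]]; [lra |].
      apply (Rbar_le_trans _ (Finite (mdist Z z z' / 2))); [simpl; lra |].
      apply dGH_Delta1_ge.
Qed.

Definition wX (s : R) : R := Rmin 1 (Rmax 0 (2 - s)).
Definition wY (s : R) : R := Rmin 1 (Rmax 0 s).

Ltac weights_lra :=
  unfold wX, wY, Rmin, Rmax, Rabs in *;
  repeat (destruct Rle_dec || destruct Rcase_abs); lra.

Lemma wX_bounds s : 0 <= wX s <= 1.          Proof. weights_lra. Qed.
Lemma wY_bounds s : 0 <= wY s <= 1.          Proof. weights_lra. Qed.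
Lemma wX_0 : wX 0 = 1.                       Proof. weights_lra. Qed.
Lemma wY_0 : wY 0 = 0.                       Proof. weights_lra. Qed.
Lemma wX_2 : wX 2 = 0.                       Proof. weights_lra. Qed.
Lemma wY_2 : wY 2 = 1.                       Proof. weights_lra. Qed.

Lemma wX_or_wY_eq1 s : 0 <= s <= 2 -> wX s = 1 \/ wY s = 1.
Proof. intros. weights_lra. Qed.

Lemma Rabs_sub_Rmin_l a b : Rabs (a - Rmin a b) <= Rabs (a - b).
Proof. unfold Rmin, Rabs; repeat (destruct Rle_dec || destruct Rcase_abs); lra. Qed.

Lemma wX_sub_Rmin s t : Rabs (wX s - Rmin (wX s) (wX t)) <= Rabs (s - t).
Proof.
  eapply Rle_trans; [apply Rabs_sub_Rmin_l |]. weights_lra.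
Qed.

Lemma wY_sub_Rmin s t : Rabs (wY s - Rmin (wY s) (wY t)) <= Rabs (s - t).
Proof.
  eapply Rle_trans; [apply Rabs_sub_Rmin_l |]. weights_lra.
Qed.

Lemma Rmin_weights_nonneg s t : 0 <= Rmin (wX s) (wX t) /\ 0 <= Rmin (wY s) (wY t).
Proof.
  pose proof (wX_bounds s); pose proof (wX_bounds t).
  pose proof (wY_bounds s); pose proof (wY_bounds t).
  split; apply Rmin_glb; lra.
Qed.

Lemma Rmult_le_shift u v d M L :
  0 <= d <= M -> Rabs (u - v) <= L -> u * d <= v * d + M * L.
Proof.
  intros Hd Huv. pose proof (Rle_abs (u - v)). pose proof (Rabs_pos (u - v)).
  assert (0 <= (L - (u - v)) * d) by (apply Rmult_le_pos; lra).
  assert (0 <= L * (M - d)) by (apply Rmult_le_pos; lra).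
  nra.
Qed.

Section WeightedMax.

Variables X Y : MetricSpace.

Definition wdist (a b : R) (p q : X * Y) : R :=
  Rmax (a * mdist X (fst p) (fst q)) (b * mdist Y (snd p) (snd q)).

Lemma wdist_nonneg a b p q : 0 <= a -> 0 <= wdist a b p q.
Proof.
  intros Ha. unfold wdist. eapply Rle_trans; [| apply Rmax_l].
  pose proof (dist_nonneg X (fst p) (fst q)). nra.
Qed.

Lemma wdist_self a b p : wdist a b p p = 0.
Proof. unfold wdist. rewrite !dist_self, !Rmult_0_r. apply Rmax_left, Rle_refl. Qed.

Lemma wdist_sym a b p q : wdist a b p q = wdist a b q p.
Proof. unfold wdist. rewrite (Defs.dist_sym X), (Defs.dist_sym Y). reflexivity. Qed.

Lemma wdist_tri a b p q w : 0 <= a -> 0 <= b ->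
  wdist a b p w <= wdist a b p q + wdist a b q w.
Proof.
  intros Ha Hb. unfold wdist.
  pose proof (Defs.dist_tri X (fst p) (fst q) (fst w)).
  pose proof (Defs.dist_tri Y (snd p) (snd q) (snd w)).
  pose proof (Rmax_l (a * mdist X (fst p) (fst q)) (b * mdist Y (snd p) (snd q))).
  pose proof (Rmax_r (a * mdist X (fst p) (fst q)) (b * mdist Y (snd p) (snd q))).
  pose proof (Rmax_l (a * mdist X (fst q) (fst w)) (b * mdist Y (snd q) (snd w))).
  pose proof (Rmax_r (a * mdist X (fst q) (fst w)) (b * mdist Y (snd q) (snd w))).
  apply Rmax_lub; nra.
Qed.

Lemma wdist_eq0 a b p q : 0 <= a -> 0 <= b -> wdist a b p q = 0 ->
  (a = 0 \/ fst p = fst q) /\ (b = 0 \/ snd p = snd q).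
Proof.
  intros Ha Hb H0. unfold wdist in H0.
  pose proof (dist_nonneg X (fst p) (fst q)). pose proof (dist_nonneg Y (snd p) (snd q)).
  pose proof (Rmax_l (a * mdist X (fst p) (fst q)) (b * mdist Y (snd p) (snd q))).
  pose proof (Rmax_r (a * mdist X (fst p) (fst q)) (b * mdist Y (snd p) (snd q))).
  split.
  - destruct (Rmult_integral a (mdist X (fst p) (fst q))) as [-> | Hd]; [nra | auto |].
    right. apply Defs.dist_eq0, Hd.
  - destruct (Rmult_integral b (mdist Y (snd p) (snd q))) as [-> | Hd]; [nra | auto |].
    right. apply Defs.dist_eq0, Hd.
Qed.

Lemma wdist_mono a b a' b' p q : 0 <= a <= a' -> 0 <= b <= b' ->
  wdist a b p q <= wdist a' b' p q.
Proof.
  intros Ha Hb. unfold wdist.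
  pose proof (dist_nonneg X (fst p) (fst q)). pose proof (dist_nonneg Y (snd p) (snd q)).
  apply Rmax_le_compat; nra.
Qed.

Lemma wdist_le_shift_weights M a b a' b' L p q :
  (forall x x', mdist X x x' <= M) -> (forall y y', mdist Y y y' <= M) ->
  Rabs (a - a') <= L -> Rabs (b - b') <= L ->
  wdist a b p q <= wdist a' b' p q + M * L.
Proof.
  intros HX HY Ha Hb. unfold wdist.
  pose proof (Rmult_le_shift a a' (mdist X (fst p) (fst q)) M L
                (conj (dist_nonneg X _ _) (HX _ _)) Ha).
  pose proof (Rmult_le_shift b b' (mdist Y (snd p) (snd q)) M L
                (conj (dist_nonneg Y _ _) (HY _ _)) Hb).
  pose proof (Rmax_l (a' * mdist X (fst p) (fst q)) (b' * mdist Y (snd p) (snd q))).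
  pose proof (Rmax_r (a' * mdist X (fst p) (fst q)) (b' * mdist Y (snd p) (snd q))).
  apply Rmax_lub; lra.
Qed.

End WeightedMax.

Section Fiber.

Variables (X Y : MetricSpace) (x0 : X) (y0 : Y).

Definition fiber_pred (s : R) (p : X * Y) : Prop :=
  (wY s = 0 -> snd p = y0) /\ (wX s = 0 -> fst p = x0).

Definition fiber (s : R) : MetricSpace.
Proof.
  refine {| carrier := {p : X * Y | fiber_pred s p};
            Defs.dist := fun p q => wdist X Y (wX s) (wY s) (proj1_sig p) (proj1_sig q) |}.
  - exact (inhabits (exist _ (x0, y0) (conj (fun _ => eq_refl) (fun _ => eq_refl)))).
  - pose proof (wX_bounds s). pose proof (wY_bounds s).
    intros [[x y] [Hy Hx]] [[x' y'] [Hy' Hx']]; simpl. split.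
    + intros Hd. apply subset_eq_compat.
      destruct (wdist_eq0 X Y (wX s) (wY s) _ _ ltac:(lra) ltac:(lra) Hd) as [Ex Ey]; simpl in *.
      f_equal.
      * destruct Ex as [Hw | E]; [rewrite (Hx Hw), (Hx' Hw) |]; auto.
      * destruct Ey as [Hw | E]; [rewrite (Hy Hw), (Hy' Hw) |]; auto.
    + intros E. injection E as -> ->. apply wdist_self.
  - intros p q. apply wdist_sym.
  - intros p q w. apply wdist_tri; [apply wX_bounds | apply wY_bounds].
Defined.

Definition fiber_proj (t : R) (p : X * Y) : X * Y :=
  (if Req_EM_T (wX t) 0 then x0 else fst p, if Req_EM_T (wY t) 0 then y0 else snd p).

Lemma fiber_proj_pred t p : fiber_pred t (fiber_proj t p).
Proof.
  unfold fiber_pred, fiber_proj; simpl.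
  split; intros H; destruct Req_EM_T; easy.
Qed.

Lemma wdist_fiber_proj t p : wdist X Y (wX t) (wY t) p (fiber_proj t p) <= 0.
Proof.
  unfold wdist, fiber_proj; simpl.
  apply Rmax_lub; destruct Req_EM_T as [-> | _]; rewrite ?dist_self; lra.
Qed.

Lemma fiber_is_diam D s :
  is_diam X D -> is_diam Y D -> 0 <= s <= 2 -> is_diam (fiber s) D.
Proof.
  intros [HX HXnear] [HY HYnear] Hs.
  pose proof (wX_bounds s). pose proof (wY_bounds s). split.
  - intros [p Hp] [q Hq]. cbn [Defs.dist fiber proj1_sig]. unfold wdist.
    pose proof (dist_nonneg X (fst p) (fst q)). pose proof (dist_nonneg Y (snd p) (snd q)).
    pose proof (HX (fst p) (fst q)). pose proof (HY (snd p) (snd q)).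
    apply Rmax_lub; nra.
  - intros eps Heps. destruct (wX_or_wY_eq1 s Hs) as [H1 | H1].
    + destruct (HXnear eps Heps) as [x [x' Hx]].
      assert (Hpred : forall x, fiber_pred s (x, y0)) by (split; simpl; [auto | lra]).
      exists (exist _ (x, y0) (Hpred x)), (exist _ (x', y0) (Hpred x')).
      cbn [Defs.dist fiber proj1_sig]. unfold wdist; simpl. rewrite H1.
      pose proof (Rmax_l (1 * mdist X x x') (wY s * mdist Y y0 y0)). lra.
    + destruct (HYnear eps Heps) as [y [y' Hy]].
      assert (Hpred : forall y, fiber_pred s (x0, y)) by (split; simpl; [lra | auto]).
      exists (exist _ (x0, y) (Hpred y)), (exist _ (x0, y') (Hpred y')).
      cbn [Defs.dist fiber proj1_sig]. unfold wdist; simpl. rewrite H1.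
      pose proof (Rmax_r (wX s * mdist X x0 x0) (1 * mdist Y y y')). lra.
Qed.

Lemma fiber_0_isometric : isometric (fiber 0) X.
Proof.
  assert (Hpred : forall x, fiber_pred 0 (x, y0)).
  { intros x. split; simpl; [auto | rewrite wX_0; lra]. }
  exists (fun p => fst (proj1_sig p)), (fun x => exist _ (x, y0) (Hpred x)).
  split; [| split].
  - intros [[x y] [Hy Hx]]. apply subset_eq_compat. simpl in *. rewrite (Hy wY_0). reflexivity.
  - reflexivity.
  - intros [[x y] Hp] [[x' y'] Hp']. cbn [Defs.dist fiber proj1_sig]. unfold wdist; simpl.
    rewrite wX_0, wY_0, Rmult_0_l, Rmult_1_l. symmetry. apply Rmax_left, dist_nonneg.
Qed.

Lemma fiber_2_isometric : isometric (fiber 2) Y.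
Proof.
  assert (Hpred : forall y, fiber_pred 2 (x0, y)).
  { intros y. split; simpl; [rewrite wY_2; lra | auto]. }
  exists (fun p => snd (proj1_sig p)), (fun y => exist _ (x0, y) (Hpred y)).
  split; [| split].
  - intros [[x y] [Hy Hx]]. apply subset_eq_compat. simpl in *. rewrite (Hx wX_2). reflexivity.
  - reflexivity.
  - intros [[x y] Hp] [[x' y'] Hp']. cbn [Defs.dist fiber proj1_sig]. unfold wdist; simpl.
    rewrite wX_2, wY_2, Rmult_0_l, Rmult_1_l. symmetry. apply Rmax_right, dist_nonneg.
Qed.

Lemma dGH_fiber_le r s t :
  (forall x x', mdist X x x' <= 2 * r) -> (forall y y', mdist Y y y' <= 2 * r) ->
  Rbar_le (dGH (fiber s) (fiber t)) (Finite (r * Rabs (s - t))).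
Proof.
  intros HX HY. destruct (Rmin_weights_nonneg s t) as [HwX HwY].
  pose proof (wX_bounds s). pose proof (wX_bounds t).
  pose proof (wY_bounds s). pose proof (wY_bounds t).
  apply (dGH_le_common_pseudometric (fiber s) (fiber t) (X * Y)
           (wdist X Y (Rmin (wX s) (wX t)) (Rmin (wY s) (wY t)))
           (@proj1_sig _ _) (@proj1_sig _ _)).
  - intros p q. apply wdist_nonneg, HwX.
  - apply wdist_sym.
  - intros p q w. apply wdist_tri; assumption.
  - intros [p Hp] [q Hq]. apply wdist_mono; split; auto using Rmin_l.
  - intros [p Hp] [q Hq]. cbn [Defs.dist fiber proj1_sig].
    replace (2 * (r * Rabs (s - t))) with (2 * r * Rabs (s - t)) by ring.
    apply wdist_le_shift_weights; auto using wX_sub_Rmin, wY_sub_Rmin.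
  - intros [p Hp] [q Hq]. apply wdist_mono; split; auto using Rmin_r.
  - intros [p Hp] [q Hq]. cbn [Defs.dist fiber proj1_sig].
    replace (2 * (r * Rabs (s - t))) with (2 * r * Rabs (t - s))
      by (rewrite Rabs_minus_sym; ring).
    rewrite (Rmin_comm (wX s)), (Rmin_comm (wY s)).
    apply wdist_le_shift_weights; auto using wX_sub_Rmin, wY_sub_Rmin.
  - intros [p Hp]. exists (exist _ (fiber_proj t p) (fiber_proj_pred t p)); simpl.
    eapply Rle_trans; [| apply (wdist_fiber_proj t p)].
    apply wdist_mono; split; auto using Rmin_r.
  - intros [q Hq]. exists (exist _ (fiber_proj s q) (fiber_proj_pred s q)); simpl.
    rewrite wdist_sym. eapply Rle_trans; [| apply (wdist_fiber_proj s q)].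
    apply wdist_mono; split; auto using Rmin_l.
Qed.

End Fiber.

Lemma GH_continuous_on_of_Lipschitz a b (f : R -> MetricSpace) L : 0 <= L ->
  (forall s t, Rbar_le (dGH (f s) (f t)) (Finite (L * Rabs (s - t)))) ->
  GH_continuous_on a b f.
Proof.
  intros HL Hf t0 _ eps Heps. exists (eps / (L + 1)).
  split; [apply Rdiv_lt_0_compat; lra |].
  intros t _ Ht. eapply Rbar_le_lt_trans; [apply Hf |]. simpl.
  rewrite Rabs_minus_sym.
  apply (Rle_lt_trans _ (L * (eps / (L + 1)))); [apply Rmult_le_compat_l; lra |].
  apply (Rmult_lt_reg_r (L + 1)); [lra |].
  replace (L * (eps / (L + 1)) * (L + 1)) with (L * eps) by (field; lra). nra.
Qed.

Theorem theorem1 (r : R) (hr : 0 <= r) (X Y : MetricSpace)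
  (hX : in_sphere_Delta1 r X) (hY : in_sphere_Delta1 r Y) :
  exists (a b : R) (f : R -> MetricSpace),
    a <= b /\ GH_continuous_on a b f /\
    isometric (f a) X /\ isometric (f b) Y /\
    (forall t, a <= t <= b -> in_sphere_Delta1 r (f t)).
Proof.
  destruct (carrier_inhabited X) as [x0], (carrier_inhabited Y) as [y0].
  apply in_sphere_Delta1_iff in hX, hY; auto.
  exists 0, 2, (fiber X Y x0 y0).
  split; [lra |]. split; [| split; [| split]].
  - apply (GH_continuous_on_of_Lipschitz _ _ _ r hr).
    intros s t. apply dGH_fiber_le; [apply hX | apply hY].
  - apply fiber_0_isometric.
  - apply fiber_2_isometric.
  - intros t Ht. apply in_sphere_Delta1_iff; auto using fiber_is_diam.
Qed.
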